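(* Let $(X_m)_{m\in\mathbb Z}$ and $(Y_m)_{m\in\mathbb Z}$ be homogeneous second order recurrence sequences with constant coefficients that possess the same recurrence relation. For integers $a,b,c,d,e$ put $$\Delta_{xy}=X_{d-a}Y_{e-b}-X_{e-a}Y_{d-b},\quad \Delta_1=X_{d-c}Y_{e-b}-X_{e-c}Y_{d-b},\quad \Delta_2=X_{d-a}X_{e-c}-X_{e-a}X_{d-c},$$ and suppose $\Delta_{xy}\neq0$, $\Delta_1\neq0$, $\Delta_2\neq 0$. Then for all integers $m$ and $k$, $$\sum_{r=0}^k\left(\frac{\Delta_{xy}}{\Delta_1}\right)^r Y_{m-k(a-c)-b+c+(a-c)r}=\frac{\Delta_{xy}}{\Delta_2}\left(\frac{\Delta_{xy}}{\Delta_1}\right)^kX_m-\frac{\Delta_1}{\Delta_2}X_{m-(k+1)(a-c)}.$$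
   Context: A homogeneous second order recurrence sequence with constant coefficients is a sequence $(X_m)_{m\in\mathbb Z}$ of complex numbers for which there are constants $p,q\in\mathbb C$, $q\neq 0$, with $X_m=pX_{m-1}+qX_{m-2}$ for all $m\in\mathbb Z$. Two such sequences possess the same recurrence relation if they satisfy it with the same constants $p,q$. Summation convention: for an integer $k<0$, $\sum_{r=0}^k f_r$ means $-\sum_{r=k+1}^{-1} f_r$ (in particular it equals $0$ when $k=-1$). *)

(* the complex numbers are represented by an arbitrary
   numClosedFieldType C (algebraically closed field with conjugation/order). *)
From HB Require Import structures.
From mathcomp Require Import all_boot all_order all_algebra all_field.
Set Implicit Arguments. Unset Strict Implicit. Unset Printing Implicit Defensive.
Import Order.TTheory GRing.Theory Num.Theory.
Local Open Scope ring_scope.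

Definition is_rec2 (C : numClosedFieldType) (p q : C) (X : int -> C) : Prop :=
  q != 0 /\ forall m : int, X m = p * X (m - 1) + q * X (m - 2).

(* Generalized sum  sum_{r=0}^k f r  for k : int:
   k >= 0 : f 0 + ... + f k ;  k < 0 : - sum_{r=k+1}^{-1} f r. *)
Definition zsum (C : numClosedFieldType) (k : int) (f : int -> C) : C :=
  match k with
  | Posz n => \sum_(i < n.+1) f (Posz i)
  | Negz n => - \sum_(i < n) f (- (Posz i.+1))
  end.

(* Any three solutions A, B, Z of one second order recurrence are linearly
   dependent, the coefficients being the 2x2 determinants of their values at two
   indices s, t: the difference of the two sides is a solution in n vanishing at
   n = s, s + 1 when t = s + 1, and then a solution in t vanishing at t = s, s + 1.
   For X, X shifted by c - a and Y shifted by c - b this reads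
   D2 Y_(n+c-b) = Dxy X_n - D1 X_(n+c-a), so with t = Dxy / D1 the r-th summand
   is (D1 / D2) (t^(r+1) X_(N+(a-c)r) - t^r X_(N+(a-c)(r-1))), which telescopes. *)
From HB Require Import structures.
From mathcomp Require Import all_boot all_order all_algebra all_field.
From mathcomp Require Import ring.
Set Implicit Arguments. Unset Strict Implicit. Unset Printing Implicit Defensive.
Import Order.TTheory GRing.Theory Num.Theory.
Local Open Scope ring_scope.

Section Recurrence.

Variables (R : idomainType) (p q : R).
Hypothesis q_neq0 : q != 0.

Definition rec2_sol (W : int -> R) := forall m, W m = p * W (m - 1) + q * W (m - 2).

Lemma rec2_sol_shift (W : int -> R) (s : int) :
  rec2_sol W -> rec2_sol (fun n => W (n + s)).
Proof. by move=> hW m; rewrite hW !(addrAC _ s). Qed.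

Lemma rec2_sol_eq0 (W : int -> R) (k : int) :
  rec2_sol W -> W k = 0 -> W (k + 1) = 0 -> forall n, W n = 0.
Proof.
move=> hW W0 W1.
suff vanish2 (j : int) : W (k + j) = 0 /\ W (k + j + 1) = 0.
  by move=> n; have [] := vanish2 (n - k); rewrite addrC subrK.
elim/int_ind: j => [|j [IH0 IH1]|j [IH0 IH1]]; first by rewrite addr0.
- rewrite intS (addrC 1) addrA; split=> //.
  rewrite hW addrK (_ : k + j + 1 + 1 - 2 = k + j); last by ring.
  by rewrite IH0 IH1 !mulr0 addr0.
- have -> : k - j.+1%:Z + 1 = k - j%:Z by rewrite intS; ring.
  split=> //.
  (* the recurrence at k - j + 1 leaves q * W (k - j - 1) = 0 *)
  have := hW (k - j%:Z + 1).
  rewrite addrK (_ : k - j%:Z + 1 - 2 = k - j.+1%:Z); last by rewrite intS; ring.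
  rewrite IH0 IH1 mulr0 add0r => /esym/eqP.
  by rewrite mulf_eq0 (negbTE q_neq0) => /eqP.
Qed.

Lemma rec2_sol_det (A B Z : int -> R) :
  rec2_sol A -> rec2_sol B -> rec2_sol Z ->
  forall n s t, Z n * (A s * B t - A t * B s)
    = A n * (Z s * B t - Z t * B s) + B n * (A s * Z t - A t * Z s).
Proof.
move=> hA hB hZ.
have det_next n s : Z n * (A s * B (s + 1) - A (s + 1) * B s)
    = A n * (Z s * B (s + 1) - Z (s + 1) * B s)
      + B n * (A s * Z (s + 1) - A (s + 1) * Z s).
  apply/eqP; rewrite -subr_eq0; apply/eqP; move: n.
  apply: (@rec2_sol_eq0 _ s) => [m||]; [|ring|ring].
  by rewrite /= [A m]hA [B m]hB [Z m]hZ; ring.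
move=> n s t; apply/eqP; rewrite -subr_eq0; apply/eqP; move: t.
apply: (@rec2_sol_eq0 _ s) => [m||]; first by rewrite /= [A m]hA [B m]hB [Z m]hZ; ring.
  by ring.
by apply/eqP; rewrite subr_eq0 det_next.
Qed.

End Recurrence.

Section GeneralizedSum.

Variable C : numClosedFieldType.

Lemma eq_zsum (k : int) (f g : int -> C) :
  f =1 g -> zsum k f = zsum k g.
Proof.
by move=> fg; case: k => n /=; [|congr (- _)]; apply: eq_bigr => i _; rewrite fg.
Qed.

Lemma mulr_zsumr (k : int) (x : C) (f : int -> C) :
  x * zsum k f = zsum k (fun r => x * f r).
Proof. by case: k => n /=; rewrite ?mulrN mulr_sumr. Qed.

Lemma zsum_telescope (k : int) (g : int -> C) :
  zsum k (fun r => g (r + 1) - g r) = g (k + 1) - g 0.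
Proof.
case: k => n /=.
  elim: n => [|n IH]; first by rewrite big_ord1.
  by rewrite big_ord_recr /= IH intS (addrC 1) addrA; ring.
rewrite NegzE (_ : - n.+1%:Z + 1 = - n%:Z); last by rewrite intS; ring.
elim: n => [|n IH]; first by rewrite big_ord0 oppr0 subrr.
rewrite big_ord_recr /= opprD IH (_ : - n.+1%:Z + 1 = - n%:Z); last by rewrite intS; ring.
by rewrite addrC opprB addrA subrK.
Qed.

Lemma zsum_geometric_telescope (t : C) (X : int -> C) (h m k : int) :
  t != 0 ->
  zsum k (fun r => t ^ r * (t * X (m - k * h + h * r) - X (m - k * h + h * r - h)))
  = t ^ (k + 1) * X m - X (m - (k + 1) * h).
Proof.
move=> t_neq0; pose u r := t ^ r * X (m - k * h + h * (r - 1)).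
rewrite (@eq_zsum _ _ (fun r => u (r + 1) - u r)) => [|r]; rewrite /u.
  rewrite zsum_telescope expr0z mul1r addrK.
  rewrite (_ : m - k * h + h * k = m); last by ring.
  by rewrite (_ : m - k * h + h * (0 - 1) = m - (k + 1) * h); last by ring.
rewrite expfzDr // expr1z addrK mulrBr mulrA.
by rewrite (_ : m - k * h + h * (r - 1) = m - k * h + h * r - h); last by ring.
Qed.

End GeneralizedSum.

Theorem lemma4 (C : numClosedFieldType) (p q : C) (X Y : int -> C)
  (hX : is_rec2 p q X) (hY : is_rec2 p q Y) (a b c d e : int) :
  let Dxy := X (d - a) * Y (e - b) - X (e - a) * Y (d - b) in
  let D1 := X (d - c) * Y (e - b) - X (e - c) * Y (d - b) in
  let D2 := X (d - a) * X (e - c) - X (e - a) * X (d - c) in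
  Dxy != 0 -> D1 != 0 -> D2 != 0 ->
  forall m k : int,
    zsum k (fun r => (Dxy / D1) ^ r * Y (m - k * (a - c) - b + c + (a - c) * r))
    = Dxy / D2 * (Dxy / D1) ^ k * X m - D1 / D2 * X (m - (k + 1) * (a - c)).
Proof.
case: hX hY => q_neq0 recX [_ recY] Dxy D1 D2 Dxy_neq0 D1_neq0 D2_neq0 m k.
have Y_in_X (n : int) : D2 * Y (n + (c - b)) = Dxy * X n - D1 * X (n + (c - a)).
  have := rec2_sol_det q_neq0 recX (rec2_sol_shift (c - a) recX)
    (rec2_sol_shift (c - b) recY) n (e - c) (d - c).
  have cancel_c x y : x - c + (c - y) = x - y by rewrite addrA subrK.
  rewrite !cancel_c [D2 * _]mulrC /D2 (mulrC (X (d - a))) (mulrC (X (e - a))) => ->.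
  by rewrite /Dxy /D1; ring.
set t := Dxy / D1; set h := a - c.
have t_neq0 : t != 0 by rewrite mulf_neq0 ?invr_eq0.
rewrite (@eq_zsum _ _ _ (fun r => D1 / D2 *
    (t ^ r * (t * X (m - k * h + h * r) - X (m - k * h + h * r - h))))) => [|r].
  rewrite -mulr_zsumr zsum_geometric_telescope // expfzDr // expr1z /t.
  by field; rewrite D1_neq0 D2_neq0.
rewrite (_ : m - k * h - b + c + h * r = m - k * h + h * r + (c - b)); last by ring.
rewrite -[Y _](mulKf D2_neq0) Y_in_X opprB /t.
by field; rewrite D1_neq0 D2_neq0.
Qed.
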